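(* Let $N=\{1,\ldots,n\}$, $\mathcal{X}=\{-1,1\}^n$, and let $P\subseteq\Delta(\mathcal{X})$ be the convex hull of a finite set $\{p_j\}_{j\in M}\subsetneq\Delta(\mathcal{X})$, where $M=\{1,\ldots,m\}$. Then: (1) A deterministic voting rule $\phi$ is $P$-robust if and only if there exists a nonzero $w\in\mathbb{R}_+^n$ such that $$\frac{\sum_{i\in N} w_i r_i(\phi,p_j)}{\sum_{i\in N} w_i}>\frac12\quad\text{for all } j\in M.$$ In particular, a deterministic voting rule is robust (i.e. $\Delta(\mathcal{X})$-robust) if and only if it is a weighted majority rule with nonnegative weights such that there are no ties. (2) A deterministic voting rule $\phi$ is weakly $P$-robust if and only if there exists a nonzero $w\in\mathbb{R}_+^n$ such that $$\frac{\sum_{i\in N} w_i r_i(\phi,p_j)}{\sum_{i\in N} w_i}\geq\frac12\quad\text{for all } j\in M.$$ In particular, a deterministic voting rule is weakly robust (i.e. weakly $\Delta(\mathcal{X})$-robust) if and only if it is a weighted majority rule with nonnegative weights.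
   Context: A deterministic voting rule is a map $\phi:\mathcal{X}\to\{-1,1\}$. $\Delta(\mathcal{X})$ is the set of probability distributions on $\mathcal{X}$. For $p\in\Delta(\mathcal{X})$, the responsiveness of individual $i$ is $r_i(\phi,p)=p(\{x:\phi(x)=x_i\})$. For $P\subseteq\Delta(\mathcal{X})$, $\phi$ is $P$-robust if for every $p\in P$ there is at least one $i\in N$ with $r_i(\phi,p)>1/2$; $\phi$ is weakly $P$-robust if for every $p\in P$ there is at least one $i\in N$ with $r_i(\phi,p)\geq 1/2$. A weighted majority rule (WMR) with nonzero weight vector $w\in\mathbb{R}^n$ is a rule with $\phi(x)=1$ whenever $\sum_iw_ix_i>0$ and $\phi(x)=-1$ whenever $\sum_iw_ix_i<0$ (ties $\sum_iw_ix_i=0$ resolved arbitrarily); it has no ties if $\sum_iw_ix_i\neq0$ for all $x\in\mathcal{X}$. *)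

From HB Require Import structures.
From mathcomp Require Import all_boot all_order all_algebra.
From mathcomp Require Import reals.
Set Implicit Arguments. Unset Strict Implicit. Unset Printing Implicit Defensive.
Import Order.TTheory GRing.Theory Num.Theory.
Local Open Scope ring_scope.

(* X = {-1,1}^n, encoded as boolean vectors: true <-> +1, false <-> -1. *)
Definition profile (n : nat) := {ffun 'I_n -> bool}.

Definition vote {R : realType} (b : bool) : R := if b then 1 else -1.

Definition rule (n : nat) := profile n -> bool.

Definition is_distr {R : realType} {n : nat} (p : profile n -> R) : Prop :=
  (forall x, 0 <= p x) /\ \sum_(x : profile n) p x = 1.

Definition resp {R : realType} {n : nat} (phi : rule n) (p : profile n -> R)
  (i : 'I_n) : R := \sum_(x : profile n | phi x == x i) p x.

Definition P_robust {R : realType} {n : nat} (P : (profile n -> R) -> Prop)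
  (phi : rule n) : Prop :=
  forall p, P p -> exists i : 'I_n, 1 / 2 < resp phi p i.

Definition weakly_P_robust {R : realType} {n : nat}
  (P : (profile n -> R) -> Prop) (phi : rule n) : Prop :=
  forall p, P p -> exists i : 'I_n, 1 / 2 <= resp phi p i.

Definition conv_hull {R : realType} {n m : nat} (ps : 'I_m -> profile n -> R)
  (q : profile n -> R) : Prop :=
  exists lam : 'I_m -> R,
    (forall j, 0 <= lam j) /\ \sum_(j < m) lam j = 1 /\
    (forall x, q x = \sum_(j < m) lam j * ps j x).

Definition wsum {R : realType} {n : nat} (w : 'I_n -> R) (x : profile n) : R :=
  \sum_(i < n) w i * vote (x i).

Definition is_WMR {R : realType} {n : nat} (w : 'I_n -> R) (phi : rule n) : Prop :=
  (exists i, w i != 0) /\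
  (forall x, (0 < wsum w x -> phi x = true) /\ (wsum w x < 0 -> phi x = false)).

Definition no_ties {R : realType} {n : nat} (w : 'I_n -> R) : Prop :=
  forall x : profile n, wsum w x != 0.

Definition nonneg_weights {R : realType} {n : nat} (w : 'I_n -> R) : Prop :=
  forall i, 0 <= w i.

Definition nonneg_nonzero {R : realType} {n : nat} (w : 'I_n -> R) : Prop :=
  nonneg_weights w /\ exists i, w i != 0.

Definition avg_resp {R : realType} {n : nat} (w : 'I_n -> R) (phi : rule n)
  (p : profile n -> R) : R :=
  (\sum_(i < n) w i * resp phi p i) / (\sum_(i < n) w i).

From HB Require Import structures.
From mathcomp Require Import all_boot all_order all_algebra.
From mathcomp Require Import reals.
From mathcomp Require Import ring lra.
From Stdlib Require Import Classical.
Set Implicit Arguments. Unset Strict Implicit. Unset Printing Implicit Defensive.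
Import Order.TTheory GRing.Theory Num.Theory.
Local Open Scope ring_scope.

(* Responsiveness r_i(phi, p) is linear in p, so on the convex hull of the
   p_j the weighted margin sum_i w_i (r_i - 1/2) is a convex combination of its
   values at the vertices.  Robustness says that no point q of the hull has
   r_i(q) <= 1/2 (resp. < 1/2) for every voter i; clearing denominators, this
   is the infeasibility of a homogeneous linear system in the mixing weights,
   and Ville's theorem of the alternative (proved by Fourier-Motzkin
   elimination) turns it into a nonnegative weight vector w whose margin is
   positive at every p_j; the weak case applies the alternative to the
   transposed system.  For P = Delta(X) the vertices are the point masses at
   profiles x, where the margin is vote(phi x) * (sum_i w_i x_i) / 2, so the
   condition says exactly that phi is a weighted majority rule (without
   ties). *)

Lemma psumr_gt0 (R : numDomainType) (I : finType) (F : I -> R) i :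
  (forall j, 0 <= F j) -> 0 < F i -> 0 < \sum_j F j.
Proof.
move=> F_ge0 Fi_gt0; rewrite lt_def sumr_ge0 // andbT psumr_neq0 //.
by apply/hasP; exists i; rewrite ?mem_index_enum.
Qed.

Lemma sum_mul_subr (R : pzRingType) (I : finType) (a b : I -> R) c :
  \sum_i a i * (b i - c) = \sum_i a i * b i - (\sum_i a i) * c.
Proof. by rewrite mulr_suml -sumrB; apply: eq_bigr => i _; rewrite mulrBr. Qed.

Lemma sum_nat_eq_mul (R : pzSemiRingType) (I : finType) (P : pred I) (F : I -> R) j :
  P j -> \sum_(i | P i) (j == i)%:R * F i = F j.
Proof.
move=> Pj; rewrite (bigD1 j) //= eqxx mul1r big1 ?addr0 // => i /andP[_ ne_ij].
by rewrite eq_sym (negbTE ne_ij) mul0r.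
Qed.

Lemma exists_between (R : realFieldType) (I K : finType) (P : pred I) (Q : pred K)
    (lo : I -> R) (hi : K -> R) :
  (forall k, Q k -> 0 < hi k) -> (forall i k, P i -> Q k -> lo i < hi k) ->
  exists t, [/\ 0 < t, forall i, P i -> lo i < t & forall k, Q k -> t < hi k].
Proof.
move=> hi_gt0 lo_lt_hi.
pose a := \big[Num.max/0]_(i | P i) lo i.
pose b := \big[Num.min/a + 1]_(k | Q k) hi k.
have a_ge0 : 0 <= a := bigmax_ge_id _ _ _ _.
have a_lt_b : a < b.
  apply: lt_bigmin => [|k Qk]; first lra.
  by apply: bigmax_lt => [|i Pi]; [exact: hi_gt0 | exact: lo_lt_hi].
exists ((a + b) / 2); split; first lra.
- move=> i Pi; have : lo i <= a := le_bigmax_cond _ _ Pi; lra.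
- move=> k Qk; have : b <= hi k := bigmin_le_cond _ _ Qk; lra.
Qed.

Definition nonpos_combination (R : numDomainType) (I J : finType)
    (A : I -> J -> R) (aI : pred I) (S : pred J) : Prop :=
  exists lam : I -> R, [/\ forall i, 0 <= lam i, exists2 i, aI i & 0 < lam i
    & forall j, S j -> \sum_(i | aI i) lam i * A i j <= 0].

Definition strictly_feasible (R : numDomainType) (I J : finType)
    (A : I -> J -> R) (aI : pred I) (S : pred J) : Prop :=
  exists2 w : J -> R, forall j, 0 <= w j &
    forall i, aI i -> 0 < \sum_(j | S j) A i j * w j.

Section FourierMotzkin.

Variables (R : realFieldType) (I J : finType) (A : I -> J -> R).
Variables (aI : pred I) (S : pred J) (j0 : J).
Hypothesis S_j0 : S j0.

Local Notation d i := (A i j0).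

(* Fourier-Motzkin elimination of the variable w j0: the rows with d i <= 0 are
   kept, and each pair of rows with d i > 0 > d k is replaced by
   d i * row k - d k * row i, in which column j0 cancels. *)
Definition fm_row (c : I -> R) (x : I + I * I) : R :=
  match x with inl i => c i | inr p => d p.1 * c p.2 - d p.2 * c p.1 end.

Definition fm_active (x : I + I * I) : bool :=
  match x with
  | inl i => aI i && (d i <= 0)
  | inr p => [&& aI p.1, aI p.2, 0 < d p.1 & d p.2 < 0]
  end.

Definition fm_matrix (x : I + I * I) (j : J) : R := fm_row (A^~ j) x.

Definition fm_cols (j : J) : bool := (j != j0) && S j.

Definition fm_weight (p : I * I) (i : I) : R :=
  d p.1 * (p.2 == i)%:R - d p.2 * (p.1 == i)%:R.

Definition fm_lift (lam : I + I * I -> R) (i : I) : R :=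
  (if fm_active (inl i) then lam (inl i) else 0) +
  \sum_(p | fm_active (inr p)) lam (inr p) * fm_weight p i.

Lemma card_fm_cols : #|fm_cols| = #|S|.-1.
Proof.
rewrite [#|S|](cardD1 j0) [j0 \in S]S_j0 add1n /=.
by apply: eq_card => j; rewrite !inE.
Qed.

Lemma fm_weight_ge0 p i : fm_active (inr p) -> 0 <= fm_weight p i.
Proof.
case/and4P=> _ _ d1_gt0 d2_lt0; rewrite /fm_weight.
by have := ler0n R (p.2 == i); have := ler0n R (p.1 == i); nra.
Qed.

Lemma fm_weight_snd p : fm_active (inr p) -> fm_weight p p.2 = d p.1.
Proof.
case/and4P=> _ _ d1_gt0 d2_lt0; have ne12 : p.1 != p.2.
  by apply: contraTneq d1_gt0 => ->; rewrite -leNgt ltW.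
by rewrite /fm_weight eqxx (negbTE ne12) mulr1 mulr0 subr0.
Qed.

Lemma fm_lift_sum lam c :
  \sum_(i | aI i) fm_lift lam i * c i = \sum_(x | fm_active x) lam x * fm_row c x.
Proof.
rewrite big_sumType /=; under eq_bigr do rewrite mulrDl.
rewrite big_split /=; congr (_ + _).
  rewrite big_mkcond [RHS]big_mkcond; apply: eq_bigr => i _ /=.
  by case: (aI i); case: (d i <= 0); rewrite /= ?mul0r.
under eq_bigr do rewrite mulr_suml.
rewrite exchange_big; apply: eq_bigr => p /and4P[a_p1 a_p2 _ _] /=.
rewrite (eq_bigr (fun i => (p.2 == i)%:R * (lam (inr p) * d p.1 * c i)
                        - (p.1 == i)%:R * (lam (inr p) * d p.2 * c i))); last first.
  by move=> i _; rewrite /fm_weight; ring.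
by rewrite sumrB !sum_nat_eq_mul //; ring.
Qed.

Lemma fm_lift_ge0 lam : (forall x, 0 <= lam x) -> forall i, 0 <= fm_lift lam i.
Proof.
move=> lam_ge0 i; apply: addr_ge0; first by case: ifP.
by apply: sumr_ge0 => p act_p; apply: mulr_ge0 (fm_weight_ge0 _ act_p).
Qed.

Lemma fm_lift_gt0 lam x : (forall x, 0 <= lam x) -> fm_active x -> 0 < lam x ->
  exists2 i, aI i & 0 < fm_lift lam i.
Proof.
move=> lam_ge0 act_x lam_x; have pairs_ge0 i :
    0 <= \sum_(p | fm_active (inr p)) lam (inr p) * fm_weight p i.
  by apply: sumr_ge0 => p act_p; apply: mulr_ge0 (fm_weight_ge0 _ act_p).
case: x act_x lam_x => [i | p] act_x lam_x.
  exists i; first by case/andP: act_x.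
  by rewrite /fm_lift act_x; have := pairs_ge0 i; lra.
exists p.2; first by case/and4P: act_x.
rewrite /fm_lift; set single := (if _ then _ else _).
have single_ge0 : 0 <= single by rewrite /single; case: ifP.
rewrite (bigD1 p) //= fm_weight_snd //.
have d1_gt0 : 0 < d p.1 by case/and4P: act_x.
have : 0 <= \sum_(q | fm_active (inr q) && (q != p)) lam (inr q) * fm_weight q p.2.
  by apply: sumr_ge0 => q /andP[act_q _]; apply: mulr_ge0 (fm_weight_ge0 _ act_q).
have := mulr_gt0 lam_x d1_gt0; lra.
Qed.

(* Each combined row is a nonnegative combination of two original rows, so a
   certificate for the eliminated system pulls back along [fm_lift]. *)
Lemma nonpos_combination_fm :
  nonpos_combination fm_matrix fm_active fm_cols -> nonpos_combination A aI S.
Proof.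
move=> [lam [lam_ge0 [x act_x lam_x] lam_le0]].
exists (fm_lift lam); split; [exact: fm_lift_ge0 | exact: fm_lift_gt0 act_x lam_x |].
move=> j Sj; rewrite (fm_lift_sum lam (A^~ j)).
have [->|ne_j] := eqVneq j j0; last by apply: lam_le0; rewrite /fm_cols ne_j.
apply: sumr_le0 => -[i /andP[_ di_le0] | p _] /=; first exact: mulr_ge0_le0.
by rewrite [d p.2 * _]mulrC subrr mulr0.
Qed.

(* The rows constrain w j0 by lower bounds (d i > 0) and upper bounds
   (d i < 0); the combined rows say precisely that these bounds are
   compatible. *)
Lemma strictly_feasible_fm :
  strictly_feasible fm_matrix fm_active fm_cols -> strictly_feasible A aI S.
Proof.
move=> [w w_ge0 w_pos]; pose s i := \sum_(j | fm_cols j) A i j * w j.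
have s_gt0 i : aI i -> d i <= 0 -> 0 < s i.
  by move=> ai di; apply: (w_pos (inl i)); rewrite /= ai di.
have s_pair i k : aI i -> aI k -> 0 < d i -> d k < 0 -> 0 < d i * s k - d k * s i.
  move=> ai ak di dk; have := w_pos (inr (i, k)); rewrite /= ai ak di dk => /(_ isT).
  by rewrite /s !mulr_sumr -sumrB; under eq_bigr do rewrite /fm_matrix /= mulrBl -!mulrA.
pose lo i := - s i / d i; pose hi k := s k / - d k.
have hi_gt0 k : aI k && (d k < 0) -> 0 < hi k.
  case/andP=> ak dk; rewrite divr_gt0 ?oppr_gt0 //.
  by apply: s_gt0 => //; exact: ltW.
have lo_lt_hi i k : aI i && (0 < d i) -> aI k && (d k < 0) -> lo i < hi k.
  case/andP=> ai di /andP[ak dk]; rewrite -subr_gt0.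
  have -> : hi k - lo i = (d i * s k - d k * s i) / (d i * - d k).
    by rewrite /hi /lo; field; rewrite ltr0_neq0 // lt0r_neq0.
  by rewrite divr_gt0 ?s_pair // mulr_gt0 ?oppr_gt0.
have [t [t_gt0 t_lo t_hi]] := exists_between hi_gt0 lo_lt_hi.
exists (fun j => if j == j0 then t else w j) => [j | i ai].
  by case: eqP => _; [exact: ltW | exact: w_ge0].
rewrite (bigD1 j0) //= eqxx.
rewrite (eq_bigr (fun j => A i j * w j)); last by move=> j /andP[_ /negbTE ->].
rewrite (eq_bigl fm_cols); last by move=> j; rewrite /fm_cols andbC.
change (0 < d i * t + s i).
case: (ltrgtP (d i) 0) => di.
- have := t_hi i; rewrite ai di ltr_pdivlMr ?oppr_gt0 // => /(_ isT); nra.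
- have := t_lo i; rewrite ai di ltr_pdivrMr // => /(_ isT); nra.
- by rewrite di mul0r add0r s_gt0 // di.
Qed.

End FourierMotzkin.

Theorem ville_alternative (R : realFieldType) (I J : finType) (A : I -> J -> R)
    (aI : pred I) (S : pred J) :
  ~ nonpos_combination A aI S -> strictly_feasible A aI S.
Proof.
move Ecard : #|S| => k; elim: k I A aI S Ecard => [|k IH] I A aI S.
  move=> /card0_eq S0 no_comb; case: (pickP aI) => [i0 ai0 | no_row]; last first.
    by exists (fun=> 0) => // i; rewrite no_row.
  case: no_comb; exists (fun i => (i == i0)%:R); split => [i | | j].
  - exact: ler0n.
  - by exists i0; rewrite ?eqxx ?ltr01.
  - by rewrite -[S j]/(j \in S) S0.
move=> card_S no_comb; have /card_gt0P[j0 Sj0] : (0 < #|S|)%N by rewrite card_S.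
apply: (strictly_feasible_fm Sj0); apply: IH; first by rewrite (card_fm_cols Sj0) card_S.
by move/nonpos_combination_fm.
Qed.

Section Robustness.

Variables (R : realType) (n : nat) (phi : rule n).

(* [conv_hull] over an arbitrary finite index type, so that the point masses,
   indexed by profiles, can serve as vertices. *)
Definition mixture (M : finType) (ps : M -> profile n -> R) (q : profile n -> R) :=
  exists lam : M -> R,
    (forall j, 0 <= lam j) /\ \sum_j lam j = 1 /\
    (forall x, q x = \sum_j lam j * ps j x).

Definition margin (w : 'I_n -> R) (p : profile n -> R) : R :=
  \sum_i w i * (resp phi p i - 1 / 2).

Lemma sum_weights_gt0 (w : 'I_n -> R) : nonneg_nonzero w -> 0 < \sum_i w i.
Proof.
by move=> [w_ge0 [i wi]]; apply: (@psumr_gt0 _ _ _ i) => //; rewrite lt_def wi w_ge0.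
Qed.

Lemma avg_resp_gt_half w p :
  nonneg_nonzero w -> (1 / 2 < avg_resp w phi p) = (0 < margin w p).
Proof.
move/sum_weights_gt0 => W_gt0.
by rewrite /avg_resp ltr_pdivlMr // /margin sum_mul_subr subr_gt0 mulrC.
Qed.

Lemma avg_resp_ge_half w p :
  nonneg_nonzero w -> (1 / 2 <= avg_resp w phi p) = (0 <= margin w p).
Proof.
move/sum_weights_gt0 => W_gt0.
by rewrite /avg_resp ler_pdivlMr // /margin sum_mul_subr subr_ge0 mulrC.
Qed.

Lemma exists_resp_gt_half w q :
  nonneg_weights w -> 0 < margin w q -> exists i, 1 / 2 < resp phi q i.
Proof.
move=> w_ge0 margin_gt0; have [i ? | resp_le] := pickP (fun i => 1 / 2 < resp phi q i).
  by exists i.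
move: margin_gt0; rewrite ltNge => /negP[]; apply: sumr_le0 => i _.
by apply: mulr_ge0_le0 => //; rewrite subr_le0 leNgt resp_le.
Qed.

Lemma exists_resp_ge_half w q :
  nonneg_nonzero w -> 0 <= margin w q -> exists i, 1 / 2 <= resp phi q i.
Proof.
move=> [w_ge0 [i0 wi0]] margin_ge0.
have [i ? | resp_lt] := pickP (fun i => 1 / 2 <= resp phi q i); first by exists i.
suff : 0 < - margin w q by lra.
have resp_lt_half i : resp phi q i < 1 / 2 by rewrite ltNge resp_lt.
rewrite /margin -sumrN (@psumr_gt0 _ _ _ i0) // => [i|].
  by rewrite -mulrN mulr_ge0 // oppr_ge0 subr_le0 ltW.
by rewrite -mulrN mulr_gt0 ?oppr_gt0 ?subr_lt0 // lt_def wi0 w_ge0.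
Qed.

Hypothesis n_gt0 : (0 < n)%N.

Section Mixtures.

Variables (M : finType) (ps : M -> profile n -> R).

Lemma resp_mixture (lam : M -> R) q i :
  (forall x, q x = \sum_j lam j * ps j x) ->
  resp phi q i = \sum_j lam j * resp phi (ps j) i.
Proof.
move=> q_def; rewrite /resp (eq_bigr _ (fun x _ => q_def x)) exchange_big /=.
by apply: eq_bigr => j _; rewrite mulr_sumr.
Qed.

Lemma margin_mixture (lam : M -> R) q w :
  \sum_j lam j = 1 -> (forall x, q x = \sum_j lam j * ps j x) ->
  margin w q = \sum_j lam j * margin w (ps j).
Proof.
move=> lam_sum1 q_def; have half_eq : 1 / 2 = (\sum_j lam j) * (1 / 2).
  by rewrite lam_sum1 [RHS]mul1r.
rewrite /margin; under eq_bigr => i _ do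
  rewrite (resp_mixture _ q_def) half_eq -sum_mul_subr mulr_sumr.
rewrite exchange_big; apply: eq_bigr => j _; rewrite mulr_sumr.
by apply: eq_bigr => i _; ring.
Qed.

Lemma mixture_normalize (mu : M -> R) :
  (forall j, 0 <= mu j) -> 0 < \sum_j mu j ->
  exists2 q, mixture ps q &
    forall i, resp phi q i * \sum_j mu j = \sum_j mu j * resp phi (ps j) i.
Proof.
move=> mu_ge0 mu_gt0; pose lam j := mu j / \sum_k mu k.
exists (fun x => \sum_j lam j * ps j x) => [|i].
  exists lam; split => [j|]; first by apply: divr_ge0 => //; apply: ltW.
  by split => //; rewrite -mulr_suml divff ?gt_eqF.
rewrite (resp_mixture i (fun x => erefl (\sum_j lam j * ps j x))) mulr_suml.
apply: eq_bigr => j _.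
by rewrite /lam mulrAC divfK ?gt_eqF.
Qed.

Lemma P_robust_mixture :
  P_robust (mixture ps) phi <->
  exists w, nonneg_nonzero w /\ forall j, 1 / 2 < avg_resp w phi (ps j).
Proof.
split=> [robust | [w [w_nn w_gt]] q [lam [lam_ge0 [lam_sum1 q_def]]]]; last first.
  apply: (exists_resp_gt_half w_nn.1).
  have : \sum_j lam j <> 0 by rewrite lam_sum1; apply/eqP; exact: oner_neq0.
  case/(psumr_neq0P (fun j _ => lam_ge0 j)) => j /andP[_ lam_j].
  rewrite (margin_mixture w lam_sum1 q_def) (@psumr_gt0 _ _ _ j) // => [k|].
    by rewrite mulr_ge0 // ltW // -avg_resp_gt_half.
  by rewrite mulr_gt0 // -avg_resp_gt_half.
pose E j i := resp phi (ps j) i - 1 / 2.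
have no_comb : ~ nonpos_combination E xpredT xpredT.
  move=> [lam [lam_ge0 [j0 _ lam_j0] comb_le0]].
  have lam_gt0 := psumr_gt0 lam_ge0 lam_j0.
  have [q q_mix q_resp] := mixture_normalize lam_ge0 lam_gt0.
  have [i resp_i] := robust q q_mix.
  have := comb_le0 i isT; rewrite /E sum_mul_subr -q_resp; nra.
have [w w_ge0 w_pos] := ville_alternative no_comb.
have margin_gt0 j : 0 < margin w (ps j).
  by rewrite /margin; under eq_bigr do rewrite mulrC; exact: w_pos.
case: (pickP (fun i => w i != 0)) => [i0 wi0 | w0].
  have w_nn : nonneg_nonzero w by split => //; exists i0.
  by exists w; split => // j; rewrite avg_resp_gt_half.
(* w can only vanish when there are no p_j at all. *)
exists (fun=> 1); split=> [|j].
  by split=> [i|]; [exact: ler01 | exists (Ordinal n_gt0); exact: oner_neq0].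
have := margin_gt0 j; rewrite /margin big1 ?ltxx // => i _.
by move/negbFE/eqP: (w0 i) => ->; rewrite mul0r.
Qed.

Lemma weakly_P_robust_mixture :
  weakly_P_robust (mixture ps) phi <->
  exists w, nonneg_nonzero w /\ forall j, 1 / 2 <= avg_resp w phi (ps j).
Proof.
split=> [robust | [w [w_nn w_ge]] q [lam [lam_ge0 [lam_sum1 q_def]]]]; last first.
  apply: (exists_resp_ge_half w_nn).
  rewrite (margin_mixture w lam_sum1 q_def); apply: sumr_ge0 => j _.
  by rewrite mulr_ge0 // -avg_resp_ge_half.
apply: NNPP => no_w.
pose B i j := - (resp phi (ps j) i - 1 / 2).
have no_comb : ~ nonpos_combination B xpredT xpredT.
  move=> [w [w_ge0 [i0 _ w_i0] comb_le0]]; apply: no_w; exists w.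
  have w_nn : nonneg_nonzero w by split => //; exists i0; rewrite gt_eqF.
  split => // j; rewrite avg_resp_ge_half //; move: (comb_le0 j isT).
  by rewrite /B; under eq_bigr do rewrite mulrN; rewrite sumrN oppr_le0.
have [mu mu_ge0 mu_pos] := ville_alternative no_comb.
have mu_gt0 : 0 < \sum_j mu j.
  rewrite lt_def sumr_ge0 // andbT; apply/eqP => /(psumr_eq0P (fun j _ => mu_ge0 j)) mu0.
  by have := mu_pos (Ordinal n_gt0) isT; rewrite big1 ?ltxx // => j _; rewrite mu0 ?mulr0.
have [q q_mix q_resp] := mixture_normalize mu_ge0 mu_gt0.
have [i resp_i] := robust q q_mix.
have := mu_pos i isT; rewrite /B; under eq_bigr do rewrite mulNr mulrC.
by rewrite sumrN sum_mul_subr -q_resp; nra.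
Qed.

End Mixtures.

Definition dirac (x : profile n) : profile n -> R := fun y => (x == y)%:R.

Lemma is_distr_mixture_dirac q : is_distr q <-> mixture dirac q.
Proof.
have dirac_mix (lam : profile n -> R) y : \sum_x lam x * dirac x y = lam y.
  rewrite (eq_bigr (fun x => (y == x)%:R * lam x)) ?sum_nat_eq_mul //.
  by move=> x _; rewrite mulrC eq_sym.
split=> [[q_ge0 q_sum1] | [lam [lam_ge0 [lam_sum1 q_def]]]].
  by exists q; split => //; split => // y; rewrite dirac_mix.
have q_lam y : q y = lam y by rewrite q_def dirac_mix.
by split=> [x|]; rewrite ?q_lam //; under eq_bigr do rewrite q_lam.
Qed.

Lemma resp_dirac x i : resp phi (dirac x) i = (phi x == x i)%:R.
Proof.
rewrite /resp /dirac; have [resp_x | resp_x] := boolP (phi x == x i).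
  rewrite (bigD1 x) //= eqxx big1 ?addr0 // => y /andP[_ ne_yx].
  by rewrite eq_sym (negbTE ne_yx).
rewrite big1 // => y phi_y; have [eq_xy | //] := eqVneq x y.
by move: resp_x; rewrite eq_xy phi_y.
Qed.

Lemma margin_dirac w x : margin w (dirac x) = vote (phi x) * wsum w x / 2.
Proof.
rewrite /margin /wsum mulr_sumr mulr_suml; apply: eq_bigr => i _.
by rewrite resp_dirac /vote; case: (phi x); case: (x i) => /=; field.
Qed.

Lemma is_WMR_no_tiesP (w : 'I_n -> R) :
  is_WMR w phi /\ no_ties w <->
  (exists i, w i != 0) /\ forall x, 0 < vote (phi x) * wsum w x.
Proof.
split=> [[[w_nz wmr] no_tie] | [w_nz agree]].
  split=> // x; have [pos neg] := wmr x; move: (no_tie x).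
  case: (ltrgtP (wsum w x) 0) => [s_lt0 | s_gt0 | ->]; rewrite ?eqxx // => _.
    by rewrite (neg s_lt0) /vote mulN1r oppr_gt0.
  by rewrite (pos s_gt0) /vote mul1r.
split; last by move=> x; apply: contraTneq (agree x) => ->; rewrite mulr0 ltxx.
split=> // x; have := agree x; rewrite /vote.
by case: (phi x) => agree_x; split=> // s; exfalso; lra.
Qed.

Lemma is_WMRP (w : 'I_n -> R) :
  is_WMR w phi <-> (exists i, w i != 0) /\ forall x, 0 <= vote (phi x) * wsum w x.
Proof.
split=> [[w_nz wmr] | [w_nz agree]].
  split=> // x; have [pos neg] := wmr x.
  case: (ltrgtP (wsum w x) 0) => [s_lt0 | s_gt0 | ->]; last by rewrite mulr0.
    by rewrite (neg s_lt0) /vote mulN1r oppr_ge0 ltW.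
  by rewrite (pos s_gt0) /vote mul1r ltW.
split=> // x; have := agree x; rewrite /vote.
by case: (phi x) => agree_x; split=> // s; exfalso; lra.
Qed.

Lemma P_robust_distr :
  P_robust (@is_distr R n) phi <->
  exists w : 'I_n -> R, nonneg_weights w /\ is_WMR w phi /\ no_ties w.
Proof.
have robust_iff : P_robust (@is_distr R n) phi <-> P_robust (mixture dirac) phi.
  by split=> robust q /is_distr_mixture_dirac /robust.
apply: (iff_trans robust_iff); apply: (iff_trans (P_robust_mixture dirac)).
split=> [[w [w_nn w_gt]] | [w [w_ge0 /is_WMR_no_tiesP [w_nz agree]]]].
  exists w; split; first exact: w_nn.1.
  apply/is_WMR_no_tiesP; split; first exact: w_nn.2.
  by move=> x; have := w_gt x; rewrite avg_resp_gt_half // margin_dirac; lra.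
have w_nn : nonneg_nonzero w by [].
by exists w; split=> // x; rewrite avg_resp_gt_half // margin_dirac; have := agree x; lra.
Qed.

Lemma weakly_P_robust_distr :
  weakly_P_robust (@is_distr R n) phi <->
  exists w : 'I_n -> R, nonneg_weights w /\ is_WMR w phi.
Proof.
have robust_iff :
    weakly_P_robust (@is_distr R n) phi <-> weakly_P_robust (mixture dirac) phi.
  by split=> robust q /is_distr_mixture_dirac /robust.
apply: (iff_trans robust_iff); apply: (iff_trans (weakly_P_robust_mixture dirac)).
split=> [[w [w_nn w_ge]] | [w [w_ge0 /is_WMRP [w_nz agree]]]].
  exists w; split; first exact: w_nn.1.
  apply/is_WMRP; split; first exact: w_nn.2.
  by move=> x; have := w_ge x; rewrite avg_resp_ge_half // margin_dirac; lra.
have w_nn : nonneg_nonzero w by [].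
by exists w; split=> // x; rewrite avg_resp_ge_half // margin_dirac; have := agree x; lra.
Qed.

End Robustness.

Theorem proposition1 (R : realType) (n : nat) (hn : (0 < n)%N) :
  (forall (m : nat) (ps : 'I_m -> profile n -> R),
     (forall j, is_distr (ps j)) ->
     (exists q : profile n -> R, is_distr q /\ forall j, q <> ps j) ->
     forall phi : rule n,
       (P_robust (conv_hull ps) phi <->
          exists w : 'I_n -> R, nonneg_nonzero w /\
            forall j, 1 / 2 < avg_resp w phi (ps j)) /\
       (weakly_P_robust (conv_hull ps) phi <->
          exists w : 'I_n -> R, nonneg_nonzero w /\
            forall j, 1 / 2 <= avg_resp w phi (ps j))) /\
  (forall phi : rule n,
     P_robust (@is_distr R n) phi <->
       exists w : 'I_n -> R, nonneg_weights w /\ is_WMR w phi /\ no_ties w) /\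
  (forall phi : rule n,
     weakly_P_robust (@is_distr R n) phi <->
       exists w : 'I_n -> R, nonneg_weights w /\ is_WMR w phi).
Proof.
(* Part (1) holds without the hypotheses that the p_j are distributions and
   that their hull is proper. *)
split=> [m ps _ _ phi | ].
  by split; [exact: P_robust_mixture | exact: weakly_P_robust_mixture].
by split=> phi; [exact: P_robust_distr | exact: weakly_P_robust_distr].
Qed.
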